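(* Let $\Sigma$ be an alphabet with $|\Sigma|\ge 3$. A function $f\colon\Sigma^*\to\Sigma^*$ is congruence preserving if and only if it is RCP.
   Context: $\Sigma^*$ denotes the free monoid over $\Sigma$ (finite words, concatenation, empty word $\varepsilon$). A congruence on $\Sigma^*$ is an equivalence relation $\sim$ such that $u\sim v$ and $u'\sim v'$ imply $uu'\sim vv'$. A function $f\colon(\Sigma^* )^k\to\Sigma^*$ is congruence preserving (CP) if for every congruence $\sim$ on $\Sigma^*$ and all $u_i\sim v_i$ ($i=1,\ldots,k$), $f(u_1,\ldots,u_k)\sim f(v_1,\ldots,v_k)$. A restricted congruence on $\Sigma^*$ is the kernel $\{(u,v)\mid \varphi(u)=\varphi(v)\}$ of a monoid morphism $\varphi\colon\Sigma^*\to\Sigma^*$. A function $f\colon(\Sigma^* )^k\to\Sigma^*$ is RCP if for every monoid morphism $\varphi\colon\Sigma^*\to\Sigma^*$ and all $u_1,\ldots,u_k,v_1,\ldots,v_k$ with $\varphi(u_i)=\varphi(v_i)$ for all $i$, we have $\varphi(f(u_1,\ldots,u_k))=\varphi(f(v_1,\ldots,v_k))$. *)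

From mathcomp Require Import all_boot.
Set Implicit Arguments. Unset Strict Implicit. Unset Printing Implicit Defensive.

Definition is_congruence (Sigma : Type) (R : seq Sigma -> seq Sigma -> Prop) : Prop :=
  [/\ (forall u, R u u),
      (forall u v, R u v -> R v u),
      (forall u v w, R u v -> R v w -> R u w) &
      (forall u v u' v', R u v -> R u' v' -> R (u ++ u') (v ++ v'))].

Definition congruence_preserving (Sigma : Type) (f : seq Sigma -> seq Sigma) : Prop :=
  forall R, is_congruence R -> forall u v, R u v -> R (f u) (f v).

Definition monoid_morphism (Sigma : Type) (phi : seq Sigma -> seq Sigma) : Prop :=
  phi [::] = [::] /\ forall u v, phi (u ++ v) = phi u ++ phi v.

(* RCP: preserves every restricted congruence (kernel of a monoid endomorphism). *)
Definition RCP (Sigma : Type) (f : seq Sigma -> seq Sigma) : Prop :=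
  forall phi, monoid_morphism phi ->
    forall u v, phi u = phi v -> phi (f u) = phi (f v).

From Pilot Require Import Defs.
From mathcomp Require Import all_boot.
Set Implicit Arguments. Unset Strict Implicit. Unset Printing Implicit Defensive.

(* A congruence preserving function is RCP because the kernel of a monoid
   morphism is a congruence. Conversely, an RCP function f is shown to be a
   polynomial u |-> w_0 u w_1 ... u w_k, and such maps are congruence
   preserving. Given three distinct letters a, b, c, the renamings c |-> a,
   c |-> b and a |-> b force the words f(c) and f(a) to coincide except at
   positions where f(c) has c and f(a) has a; these positions are the
   occurrences of the variable. Agreement of f with this polynomial on a word u
   then follows by induction on |u|: u is separated from every other word by a
   pair (or family) of morphisms, each identifying u with a word already
   treated, and RCP transports the agreement along each morphism. The families
   used are two renamings onto a letter x (for x and for constant words x^n),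
   all erasures (for the empty word), and z |-> xy together with the erasure
   of x (for words p x y q with x <> y, z a third letter). *)

Lemma kernel_congruence (T : Type) (phi : seq T -> seq T) :
  Defs.monoid_morphism phi -> is_congruence (fun u v => phi u = phi v).
Proof.
case=> _ phiM; split=> [//|u v ->//|u v w -> //|u v u' v' E E'].
by rewrite !phiM E E'.
Qed.

Lemma CP_RCP (T : Type) (f : seq T -> seq T) : congruence_preserving f -> RCP f.
Proof. by move=> fCP phi /kernel_congruence /fCP; apply. Qed.

Lemma three_distinct (T : finType) : 2 < #|T| ->
  exists a b c : T, [/\ a != b, a != c & b != c].
Proof.
rewrite cardE; have := enum_uniq T.
case: (enum T) => [|a [|b [|c s]]] //=; rewrite !inE !negb_or.
by case/and3P=> /and3P[ab ac _] /andP[bc _] _ _; exists a, b, c.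
Qed.

Section Words.
Variable S : eqType.
Implicit Types (x y z l r : S) (s u v w : seq S) (h : S -> seq S) (t : seq (option S)).

Definition morph h u := flatten (map h u).

Lemma morph_cat h u v : morph h (u ++ v) = morph h u ++ morph h v.
Proof. by rewrite /morph map_cat flatten_cat. Qed.

Lemma morph_cons h x u : morph h (x :: u) = h x ++ morph h u.
Proof. by []. Qed.

Lemma monoid_morphism_morph h : Defs.monoid_morphism (morph h).
Proof. by split=> //; apply: morph_cat. Qed.

Definition rename x y z := if z == x then y else z.
Definition erase x z := if z == x then [::] else [:: z].
Definition expand z w x := if x == z then w else [:: x].

Lemma morph_rename x y s : morph (fun z => [:: rename x y z]) s = map (rename x y) s.
Proof. by elim: s => //= z s <-. Qed.

Lemma morph_erase x s : morph (erase x) s = [seq z <- s | z != x].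
Proof. by elim: s => //= z s <-; rewrite morph_cons /erase; case: eqP. Qed.

Lemma size_filter_neq_lt x w : x \in w -> size [seq l <- w | l != x] < size w.
Proof.
elim: w => //= l w IH; rewrite in_cons eq_sym; case: eqVneq => [->|lx] /=.
  by rewrite ltnS size_filter count_size.
by rewrite ltnS; apply: IH.
Qed.

Lemma adjacent_or_constant x s :
  (exists p y z q, x :: s = p ++ y :: z :: q /\ y != z) \/ x :: s = nseq (size s).+1 x.
Proof.
elim: s x => [|y s IH] x; first by right.
case: (eqVneq x y) => [<-|xy]; last by left; exists [::], x, y, s.
case: (IH x) => [[p [y1 [z1 [q [E yz]]]]]|E]; last by right; congr (_ :: _).
by left; exists (x :: p), y1, z1, q; rewrite /= E.
Qed.

Lemma rename2_inj x y z l l' : y != z -> y != x -> z != x ->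
  rename y x l = rename y x l' -> rename z x l = rename z x l' -> l = l'.
Proof.
rewrite /rename => yz yx zx.
by do 4!case: ifP => /eqP ?; subst => // *; subst; rewrite eqxx in yz yx zx.
Qed.

Lemma map_rename2_inj x y z s s' : y != z -> y != x -> z != x ->
  map (rename y x) s = map (rename y x) s' -> map (rename z x) s = map (rename z x) s' ->
  s = s'.
Proof.
move=> yz yx zx; elim: s s' => [|l s IH] [|l' s'] //= [E1 /IH E] [E2 /E ->].
by rewrite (rename2_inj yz yx zx E1 E2).
Qed.

Lemma filter_neq_inj s s' : (forall p q, exists r, (p != r) && (q != r)) ->
  (forall r, [seq l <- s | l != r] = [seq l <- s' | l != r]) -> s = s'.
Proof.
move=> other; elim: s s' => [|l s IH] [|l' s'] E //.
- by have [r /andP[l'r _]] := other l' l'; move: (E r); rewrite /= l'r.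
- by have [r /andP[lr _]] := other l l; move: (E r); rewrite /= lr.
have [r /andP[lr l'r]] := other l l'.
move: (E r); rewrite /= lr l'r => -[ll' _]; subst l'; congr (_ :: _); apply: IH => r'.
by move: (E r') => /=; case: (l != r') => // -[].
Qed.

Lemma expand_erase_head_contra x y z q s s' : x != y -> z != x -> z != y -> q != z ->
  morph (expand z [:: x; y]) (z :: s) = morph (expand z [:: x; y]) (q :: s') ->
  [seq l <- z :: s | l != x] = [seq l <- q :: s' | l != x] -> False.
Proof.
move=> xy zx zy qz; rewrite !morph_cons /expand eqxx (negbTE qz) /= zx.
case=> <- E; rewrite eqxx /=.
case: s' E => [|m s'] //; rewrite !morph_cons /expand.
case: (eqVneq m z) => [->|mz] /=; first by case=> yx; rewrite yx eqxx in xy.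
case=> <- _; rewrite eq_sym xy /=.
by case=> zy'; rewrite zy' eqxx in zy.
Qed.

Lemma expand_erase_inj x y z s s' : x != y -> z != x -> z != y ->
  morph (expand z [:: x; y]) s = morph (expand z [:: x; y]) s' ->
  [seq l <- s | l != x] = [seq l <- s' | l != x] -> s = s'.
Proof.
move=> xy zx zy; elim: s s' => [|l s IH] [|l' s'] //.
- by rewrite morph_cons /expand; case: ifP.
- by rewrite morph_cons /expand; case: ifP.
case: (eqVneq l l') => [<-|ll'].
  rewrite !morph_cons /= => /eqP; rewrite eqseq_cat // eqxx => /eqP E1.
  by case: (l != x) => [[]|] E2; congr (_ :: _); apply: IH.
case: (eqVneq l z) => [lz|lz].
  by subst l => E1 E2; case: (expand_erase_head_contra xy zx zy _ E1 E2); rewrite eq_sym.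
case: (eqVneq l' z) => [l'z|l'z].
  by subst l' => E1 E2; case: (expand_erase_head_contra xy zx zy lz (esym E1) (esym E2)).
rewrite !morph_cons /expand (negbTE lz) (negbTE l'z) /=.
by case=> E; rewrite E eqxx in ll'.
Qed.

(* A polynomial w_0 X w_1 ... X w_k is a [seq (option S)]: [Some x] is a
   constant letter, [None] an occurrence of the variable X. *)
Definition peval_by h t u := flatten [seq if o is Some x then h x else u | o <- t].
Definition peval t u := peval_by (fun x => [:: x]) t u.

Lemma morph_peval h t u : morph h (peval t u) = peval_by h t (morph h u).
Proof.
elim: t => [|[x|] t IH] //; rewrite /peval /peval_by /= ?morph_cons ?morph_cat.
all: by congr (_ ++ _); apply: IH.
Qed.

Lemma peval_congr R t u v : is_congruence R -> R u v -> R (peval t u) (peval t v).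
Proof.
case=> refl _ _ congr_cat Ruv; elim: t => [|[x|] t IH] /=; first exact: refl.
all: exact: congr_cat.
Qed.

Definition interpolate x y s1 s2 : seq (option S) :=
  [seq if (p.1 == x) && (p.2 == y) then None else Some p.1 | p <- zip s1 s2].

(* The letters at one position of f(c), f(a), f(b) are either a common
   constant or the variable instantiated by c, a, b. *)
Lemma rename3_agree a b c x1 x2 x3 : a != b -> a != c -> b != c ->
  rename c a x1 = rename c a x2 -> rename c b x1 = rename c b x3 ->
  rename a b x2 = rename a b x3 -> x1 = x2 \/ x1 = c /\ x2 = a.
Proof.
rewrite /rename => ab ac bc.
do ![case: ifP => /eqP ?].
all: by move=> *; subst; rewrite ?eqxx in ab ac bc; auto.
Qed.

Lemma peval_interpolate a b c s1 s2 s3 : a != b -> a != c -> b != c ->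
  map (rename c a) s1 = map (rename c a) s2 -> map (rename c b) s1 = map (rename c b) s3 ->
  map (rename a b) s2 = map (rename a b) s3 ->
  peval (interpolate c a s1 s2) [:: c] = s1 /\ peval (interpolate c a s1 s2) [:: a] = s2.
Proof.
move=> ab ac bc.
elim: s1 s2 s3 => [|x1 s1 IH] [|x2 s2] [|x3 s3] //= [E1 /IH F1] [E2 /F1 F2] [E3 /F2].
rewrite /peval /peval_by /= => -[-> ->].
case: (rename3_agree ab ac bc E1 E2 E3) => [<-|[-> ->]]; last by rewrite !eqxx.
by case: ifP => // /andP[/eqP-> /eqP->].
Qed.

Lemma other_letter (a b c p q : S) : a != b -> a != c -> b != c ->
  exists r, (p != r) && (q != r).
Proof.
move=> ab ac bc.
case: (boolP ((p != a) && (q != a))) => [|Ha]; first by exists a.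
case: (boolP ((p != b) && (q != b))) => [|Hb]; first by exists b.
exists c; move: Ha Hb; rewrite !negb_and !negbK.
by case/orP => /eqP ?; case/orP => /eqP ?; subst; rewrite ?eqxx ?ac ?bc in ab *.
Qed.

Section RCPFunction.
Variable f : seq S -> seq S.
Hypothesis fRCP : RCP f.

Lemma RCP_morph h u v : morph h u = morph h v -> morph h (f u) = morph h (f v).
Proof. exact: fRCP (monoid_morphism_morph h) u v. Qed.

Lemma RCP_rename x y : map (rename x y) (f [:: x]) = map (rename x y) (f [:: y]).
Proof.
rewrite -!morph_rename; apply: RCP_morph.
by rewrite !morph_rename /= /rename eqxx; case: ifP => // /eqP->.
Qed.

Lemma RCP_transfer t h u v : morph h u = morph h v -> f v = peval t v ->
  morph h (f u) = morph h (peval t u).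
Proof. by move=> huv fv; rewrite (RCP_morph huv) fv !morph_peval huv. Qed.

Lemma peval_fit_by_renames t x y z u v1 v2 : y != z -> y != x -> z != x ->
  map (rename y x) u = map (rename y x) v1 -> f v1 = peval t v1 ->
  map (rename z x) u = map (rename z x) v2 -> f v2 = peval t v2 ->
  f u = peval t u.
Proof.
move=> yz yx zx E1 F1 E2 F2; apply: (map_rename2_inj yz yx zx); rewrite -!morph_rename.
  by apply: RCP_transfer F1; rewrite !morph_rename.
by apply: RCP_transfer F2; rewrite !morph_rename.
Qed.

Lemma peval_fit_by_expand_erase t p q x y z : x != y -> z != x -> z != y ->
  f (p ++ z :: q) = peval t (p ++ z :: q) ->
  f [seq l <- p ++ x :: y :: q | l != x] = peval t [seq l <- p ++ x :: y :: q | l != x] ->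
  f (p ++ x :: y :: q) = peval t (p ++ x :: y :: q).
Proof.
move=> xy zx zy F1 F2; apply: (expand_erase_inj xy zx zy).
  apply: RCP_transfer F1.
  by rewrite !morph_cat !morph_cons /expand eqxx !(eq_sym _ z) (negbTE zx) (negbTE zy).
by rewrite -!morph_erase; apply: RCP_transfer F2; rewrite !morph_erase filter_id.
Qed.

Lemma peval_fit_nil t : (forall p q, exists r, (p != r) && (q != r)) ->
  (forall x, f [:: x] = peval t [:: x]) -> f [::] = peval t [::].
Proof.
move=> other fx; apply: filter_neq_inj other _ => r; rewrite -!morph_erase.
by apply: (RCP_transfer (v := [:: r])) (fx r); rewrite !morph_erase /= eqxx.
Qed.

Variables a b c : S.
Hypotheses (ab : a != b) (ac : a != c) (bc : b != c).
Let other p q := other_letter p q ab ac bc.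

Definition RCP_template := interpolate c a (f [:: c]) (f [:: a]).

Lemma RCP_letter x : f [:: x] = peval RCP_template [:: x].
Proof.
have [fc fa] := peval_interpolate ab ac bc (RCP_rename c a) (RCP_rename c b) (RCP_rename a b).
case: (eqVneq x c) => [->|xc]; first by rewrite fc.
case: (eqVneq x a) => [->|xa]; first by rewrite fa.
apply: (peval_fit_by_renames (x := x) (y := a) (z := c) (v1 := [:: a]) (v2 := [:: c])) => //.
- by rewrite eq_sym.
- by rewrite eq_sym.
- by rewrite /= /rename eqxx (negbTE xa).
- by rewrite /= /rename eqxx (negbTE xc).
Qed.

Lemma RCP_peval u : f u = peval RCP_template u.
Proof.
elim: {u}(size u) {-2}u (leqnn (size u)) => [|n IH] u.
  by rewrite leqn0 size_eq0 => /eqP ->; exact: peval_fit_nil other RCP_letter.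
have fit_adjacent p x y q : x != y -> size (p ++ x :: y :: q) <= n.+1 ->
    f (p ++ x :: y :: q) = peval RCP_template (p ++ x :: y :: q).
  move=> xy sz; have [z /andP[xz yz]] := other x y.
  have sz1 : size (p ++ z :: q) <= n by move: sz; rewrite !size_cat /= addnS.
  have sz2 : size [seq l <- p ++ x :: y :: q | l != x] <= n.
    by rewrite -ltnS (leq_trans _ sz) // size_filter_neq_lt // mem_cat inE eqxx orbT.
  by apply: (peval_fit_by_expand_erase xy) (IH _ sz1) (IH _ sz2); rewrite eq_sym.
case: u => [_|x s]; first exact: peval_fit_nil other RCP_letter.
case: (adjacent_or_constant x s) => [[p [y [z [q [-> yz]]]]]|->]; first exact: fit_adjacent.
rewrite size_nseq; case: (size s) => [_|m sz]; first exact: RCP_letter.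
(* The renamings y |-> x and z |-> x identify x^(m+2) with y x^(m+1) and
   z x^(m+1), which have the same length and two distinct adjacent letters. *)
have [y /andP[xy _]] := other x x; have [z /andP[xz yz]] := other x y.
apply: (peval_fit_by_renames (x := x) (y := y) (z := z)
          (v1 := y :: nseq m.+1 x) (v2 := z :: nseq m.+1 x)); rewrite // 1?eq_sym //.
- by rewrite map_cons !map_nseq /rename eqxx if_same.
- by apply: (fit_adjacent [::] y x (nseq m x)); rewrite 1?eq_sym //= size_nseq.
- by rewrite map_cons !map_nseq /rename eqxx if_same.
- by apply: (fit_adjacent [::] z x (nseq m x)); rewrite 1?eq_sym //= size_nseq.
Qed.

End RCPFunction.
End Words.

Theorem mainTheorem4 (Sigma : finType) (hSigma : 3 <= #|Sigma|)
  (f : seq Sigma -> seq Sigma) :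
  congruence_preserving f <-> RCP f.
Proof.
split=> [|fRCP]; first exact: CP_RCP.
have [a [b [c [ab ac bc]]]] := three_distinct hSigma.
move=> R RR u v Ruv; rewrite !(RCP_peval fRCP ab ac bc); exact: peval_congr.
Qed.
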